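(* Let $0\le N\le M-1$, let $x=(x_1<\dots<x_N)$ and $y=(y_1<\dots<y_{N+1})$ be subsets of $\{1,\dots,M\}$, and likewise $\overline{x}=(\overline{x_1}<\dots<\overline{x_N})$, $\overline{y}=(\overline{y_1}<\dots<\overline{y_{N+1}})$. Then \begin{align*} \langle y_1\cdots y_{N+1}|B(u)|x_1\cdots x_N\rangle&=G_{y,x}(u),& \langle\overline{x_1}\cdots\overline{x_N}|B(u)|\overline{y_1}\cdots\overline{y_{N+1}}\rangle&=H_{\overline{y},\overline{x}}(u),\\ \langle x_1\cdots x_N|C(u)|y_1\cdots y_{N+1}\rangle&=\overline{G}_{y,x}(u),& \langle\overline{y_1}\cdots\overline{y_{N+1}}|C(u)|\overline{x_1}\cdots\overline{x_N}\rangle&=\overline{H}_{\overline{y},\overline{x}}(u). \end{align*}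
   Context: Fix complex parameters $t,a,b,c,d,e,f$, all nonzero, with $t\neq1$, satisfying $cd+af=0$ and $tcd+be=0$. The $L$-operator $L_{aj}(u)$ on $W_a\otimes V_j$ ($\cong\mathbb{C}^2\otimes\mathbb{C}^2$, basis $|0\rangle,|1\rangle$) has matrix elements $[L(u)]^{\gamma\delta}_{\alpha\beta}={}_a\langle\gamma|{}_j\langle\delta|L_{aj}(u)|\alpha\rangle_a|\beta\rangle_j$: $[L]^{00}_{00}=au+b$, $[L]^{01}_{01}=atu+b$, $[L]^{01}_{10}=(1-t)cu$, $[L]^{10}_{01}=(1-t)d$, $[L]^{10}_{10}=eu+f$, $[L]^{11}_{11}=eu+tf$, all others $0$. Monodromy $T_a(u)=L_{aM}(u)\cdots L_{a1}(u)$, $B(u)={}_a\langle0|T_a(u)|1\rangle_a$, $C(u)={}_a\langle1|T_a(u)|0\rangle_a$, acting on $V_1\otimes\cdots\otimes V_M$. $|x_1\cdots x_N\rangle$ is the basis tensor with $|1\rangle$ at sites $x_j$ and $|0\rangle$ elsewhere; $|\overline{x_1}\cdots\overline{x_N}\rangle$ is the basis tensor with $|0\rangle$ at sites $\overline{x_j}$ and $|1\rangle$ elsewhere; bras are duals. For strictly increasing $y=(y_1<\dots<y_{N+1})$, $x=(x_1<\dots<x_N)$ write $y\succ x$ if $y_1\le x_1\le y_2\le x_2\le\cdots\le x_N\le y_{N+1}$. For $y\succ x$, let $p_1<\dots<p_{k+1}$ be the $y_j$ ($1\le j\le N+1$) with $y_j\notin\{x_j,x_{j-1}\}$ (ignoring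 undefined $x_0,x_{N+1}$), let $q_1<\dots<q_k$ be the $x_j$ with $x_j\notin\{y_j,y_{j+1}\}$, and set $q_0=0$, $q_{k+1}=M+1$. For integers $\alpha<\beta$ put $n_x(\alpha,\beta)=\#\{\ell:\alpha<x_\ell<\beta\}$. Define $G_{y,x}(u)=((1-t)cu)^{k+1}((1-t)d)^k\prod_{j=1}^{k+1}(atu+b)^{n_x(p_j,q_j)}(au+b)^{q_j-p_j-1-n_x(p_j,q_j)}(eu+tf)^{n_x(q_{j-1},p_j)}(eu+f)^{p_j-q_{j-1}-1-n_x(q_{j-1},p_j)}$, $\overline{G}_{y,x}(u)=((1-t)d)^{k+1}((1-t)cu)^k\prod_{j=1}^{k+1}(eu+tf)^{n_x(p_j,q_j)}(eu+f)^{q_j-p_j-1-n_x(p_j,q_j)}(atu+b)^{n_x(q_{j-1},p_j)}(au+b)^{p_j-q_{j-1}-1-n_x(q_{j-1},p_j)}$, and $G_{y,x}(u)=\overline{G}_{y,x}(u)=0$ if not $y\succ x$. For hole sequences $\overline{y},\overline{x}$, with $\overline{y}\succ\overline{x}$, $\overline{p_j},\overline{q_j}$ and $n_{\overline{x}}$ defined in the same way from $\overline{y},\overline{x}$ ($\overline{q_0}=0$, $\overline{q_{k+1}}=M+1$), define $H_{\overline{y},\overline{x}}(u)=((1-t)cu)^{k+1}((1-t)d)^k\prod_{j=1}^{k+1}(au+b)^{n_{\overline{x}}(\overline{p_j},\overline{q_j})}(atu+b)^{\overline{q_j}-\overline{p_j}-1-n_{\overline{x}}(\overline{p_j},\overline{q_j})}(eu+f)^{n_{\overline{x}}(\overline{q_{j-1}},\overline{p_j})}(eu+tf)^{\overline{p_j}-\overline{q_{j-1}}-1-n_{\overline{x}}(\overline{q_{j-1}},\overline{p_j})}$,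 $\overline{H}_{\overline{y},\overline{x}}(u)=((1-t)d)^{k+1}((1-t)cu)^k\prod_{j=1}^{k+1}(eu+f)^{n_{\overline{x}}(\overline{p_j},\overline{q_j})}(eu+tf)^{\overline{q_j}-\overline{p_j}-1-n_{\overline{x}}(\overline{p_j},\overline{q_j})}(au+b)^{n_{\overline{x}}(\overline{q_{j-1}},\overline{p_j})}(atu+b)^{\overline{p_j}-\overline{q_{j-1}}-1-n_{\overline{x}}(\overline{q_{j-1}},\overline{p_j})}$, and both are $0$ if not $\overline{y}\succ\overline{x}$. *)

From HB Require Import structures.
From mathcomp Require Import all_boot all_order all_algebra.
Set Implicit Arguments. Unset Strict Implicit. Unset Printing Implicit Defensive.
Import Order.TTheory GRing.Theory Num.Theory.
Local Open Scope ring_scope.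

Section Defs.
Variable R : fieldType.
Variables (t a b c d e f : R).

(* [L(u)]^{gam del}_{alp bet} : alp = auxiliary input, bet = site input,
   gam = auxiliary output, del = site output; false = |0>, true = |1>. *)
Definition Lel (u : R) (gam del alp bet : bool) : R :=
  match alp, bet, gam, del with
  | false, false, false, false => a * u + b
  | false, true,  false, true  => a * t * u + b
  | true,  false, false, true  => (1 - t) * c * u
  | false, true,  true,  false => (1 - t) * d
  | true,  false, true,  false => e * u + f
  | true,  true,  true,  true  => e * u + t * f
  | _, _, _, _ => 0
  end.

(* Matrix element  <aout|_a <out| L_{ak}(u) ... L_{a1}(u) |ain>_a |inn>
   of the partial monodromy on sites 1..k, in the tensor-product basis;
   a configuration is given by its occupation function (site i carries |1>
   iff occ i = true).  This is the literal unfolding of the operator product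
   T^{(k+1)} = L_{a,k+1} T^{(k)} in the basis. *)
Fixpoint mono (u : R) (k : nat) (aout ain : bool) (out inn : nat -> bool) : R :=
  match k with
  | 0 => if aout == ain then 1 else 0
  | k'.+1 => \sum_(s : bool)
              Lel u aout (out k'.+1) s (inn k'.+1) * mono u k' s ain out inn
  end.

Definition Bel (u : R) (M : nat) (out inn : nat -> bool) : R := mono u M false true out inn.
Definition Cel (u : R) (M : nat) (out inn : nat -> bool) : R := mono u M true false out inn.

End Defs.

(* basis tensors: |x_1...x_N> has |1> exactly at the sites in x;
   |bar x_1 ... bar x_N> has |0> exactly at the sites in x. *)
Definition part_occ (x : seq nat) : nat -> bool := fun i => i \in x.
Definition hole_occ (x : seq nat) : nat -> bool := fun i => i \notin x.

(* y \succ x  (0-based indices: y_0 <= x_0 <= y_1 <= ... <= x_{N-1} <= y_N) *)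
Definition interlace (y x : seq nat) : bool :=
  (size y == (size x).+1) &&
  all (fun i => (nth 0 y i <= nth 0 x i <= nth 0 y i.+1)%N) (iota 0 (size x)).

Definition pseq (y x : seq nat) : seq nat :=
  [seq nth 0 y i | i <- iota 0 (size y) &
     ~~ ((i < size x)%N && (nth 0 y i == nth 0 x i)) &&
     ~~ ((0 < i)%N && (nth 0 y i == nth 0 x i.-1))].

Definition qseq (y x : seq nat) : seq nat :=
  [seq nth 0 x i | i <- iota 0 (size x) &
     (nth 0 x i != nth 0 y i) && (nth 0 x i != nth 0 y i.+1)].

Definition nx (x : seq nat) (al be : nat) : nat := count (fun z => (al < z < be)%N) x.

Section Gdefs.
Variable R : fieldType.

(* 1-based p_j, and q_j with q_0 = 0, q_{k+1} = M+1 *)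
Definition pj (y x : seq nat) (j : nat) : nat := nth 0 (pseq y x) j.-1.
Definition qj (M : nat) (y x : seq nat) (j : nat) : nat :=
  if j == 0%N then 0%N
  else if j == (size (qseq y x)).+1 then M.+1
  else nth 0 (qseq y x) j.-1.

Definition prodform (M : nat) (y x : seq nat) (A B C D : R) : R :=
  \prod_(1 <= j < (size (qseq y x)).+2)
    let p := pj y x j in let q := qj M y x j in let q' := qj M y x j.-1 in
    A ^+ nx x p q * B ^+ (q - p - 1 - nx x p q)%N *
    C ^+ nx x q' p * D ^+ (p - q' - 1 - nx x q' p)%N.

Variables (t a b c d e f : R).

Definition Gf (M : nat) (y x : seq nat) (u : R) : R :=
  if interlace y x then
    ((1 - t) * c * u) ^+ (size (qseq y x)).+1 * ((1 - t) * d) ^+ size (qseq y x) *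
    prodform M y x (a * t * u + b) (a * u + b) (e * u + t * f) (e * u + f)
  else 0.

Definition Gbarf (M : nat) (y x : seq nat) (u : R) : R :=
  if interlace y x then
    ((1 - t) * d) ^+ (size (qseq y x)).+1 * ((1 - t) * c * u) ^+ size (qseq y x) *
    prodform M y x (e * u + t * f) (e * u + f) (a * t * u + b) (a * u + b)
  else 0.

Definition Hf (M : nat) (yb xb : seq nat) (u : R) : R :=
  if interlace yb xb then
    ((1 - t) * c * u) ^+ (size (qseq yb xb)).+1 * ((1 - t) * d) ^+ size (qseq yb xb) *
    prodform M yb xb (a * u + b) (a * t * u + b) (e * u + f) (e * u + t * f)
  else 0.

Definition Hbarf (M : nat) (yb xb : seq nat) (u : R) : R :=
  if interlace yb xb then
    ((1 - t) * d) ^+ (size (qseq yb xb)).+1 * ((1 - t) * c * u) ^+ size (qseq yb xb) *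
    prodform M yb xb (e * u + f) (e * u + t * f) (a * u + b) (a * t * u + b)
  else 0.

End Gdefs.

Definition site_seq (M N : nat) (x : seq nat) : bool :=
  [&& size x == N, sorted ltn x & all (fun i => (0 < i <= M)%N) x].

From HB Require Import structures.
From mathcomp Require Import all_boot all_order all_algebra.
From mathcomp Require Import zify ring.
Import GRing.Theory.

Set Implicit Arguments. Unset Strict Implicit. Unset Printing Implicit Defensive.

(* Expanding the monodromy, a matrix element of B(u) or C(u) is a sum over the
   auxiliary states between consecutive sites of products of entries of L. Every
   nonzero entry of L conserves the number of |1>'s, so the auxiliary state after
   site i is forced: up to relabelling it records whether y has one more element
   than x among the sites 1..i. This difference must stay in {0,1}, which is the
   interlacing y >- x, and it equals 1 exactly on the runs p_j <= i < q_j. Cutting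
   1..M at 0 = q_0 < p_1 < q_1 < ... < q_k < p_(k+1) < q_(k+1) = M+1 splits the
   product of local weights into the factors of G. The other three identities are
   the same statement for L with the auxiliary and/or site spaces relabelled
   |0> <-> |1>. *)

Definition cnt_le (s : seq nat) (i : nat) : nat := count (fun v => v <= i) s.

Lemma cnt_le_eq0 s i : all (fun v => i < v) s -> cnt_le s i = 0.
Proof.
by move=> /allP h; apply/eqP; rewrite eqn0Ngt -has_count; apply/hasPn => v /h; rewrite -ltnNge.
Qed.

Lemma cnt_le_nth s i j : sorted ltn s -> j < size s -> (nth 0 s j <= i) = (j < cnt_le s i).
Proof.
elim: s j => // v s IH j /= hs hj.
have gt_v : all (fun z => v < z) s := order_path_min ltn_trans hs.
rewrite /cnt_le /= -/(cnt_le s i); case: j hj => [|j] hj /=.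
  case: (leqP v i) => //= lt_iv; rewrite cnt_le_eq0 //.
  by apply: sub_all gt_v => z /=; apply: ltn_trans.
rewrite IH ?(path_sorted hs) //; case: (leqP v i) => //= lt_iv.
by rewrite cnt_le_eq0 //; apply: sub_all gt_v => z /=; apply: ltn_trans.
Qed.

Lemma cnt_le_between s i n : sorted ltn s -> n <= size s ->
  (0 < n -> nth 0 s n.-1 <= i) -> (n < size s -> i < nth 0 s n) -> cnt_le s i = n.
Proof.
move=> hs hn lo hi; apply/eqP; rewrite eqn_leq; apply/andP; split.
  case: (ltnP n (size s)) => hn'; first by have := cnt_le_nth i hs hn'; have := hi hn'; lia.
  by have := count_size (fun v => v <= i) s; rewrite -/(cnt_le s i); lia.
by case: n hn lo {hi} => // n hn lo; rewrite -(cnt_le_nth i hs hn) lo.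
Qed.

Lemma cnt_leS s i : uniq s -> cnt_le s i.+1 = cnt_le s i + (i.+1 \in s).
Proof.
move=> hu; rewrite -(count_uniq_mem _ hu) /cnt_le.
by elim: s {hu} => //= v s ->; rewrite eq_sym; case: (ltngtP v i.+1) => h /=; lia.
Qed.

Lemma cnt_le_max s M : all (fun v => v <= M) s -> cnt_le s M = size s.
Proof. by move=> h; apply/eqP; rewrite /cnt_le -all_count. Qed.

Lemma count_split (T : Type) (a p : pred T) s :
  count a s = count (fun v => a v && p v) s + count (fun v => a v && ~~ p v) s.
Proof. by elim: s => //= v s ->; case: (a v); case: (p v) => /=; lia. Qed.

Lemma count_mem_sym (a : pred nat) s1 s2 : uniq s1 -> uniq s2 ->
  count (fun v => a v && (v \in s2)) s1 = count (fun v => a v && (v \in s1)) s2.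
Proof.
move=> u1 u2; rewrite -!(count_filter a).
suff /permP-> : perm_eq [seq v <- s1 | v \in s2] [seq v <- s2 | v \in s1] by [].
by apply: uniq_perm; rewrite ?filter_uniq // => v; rewrite !mem_filter andbC.
Qed.

Lemma ltn_sorted_nth s i j : sorted ltn s -> i < j -> j < size s -> nth 0 s i < nth 0 s j.
Proof. by move=> hs hij hj; apply: (sorted_ltn_nth ltn_trans) => //; rewrite inE; lia. Qed.

Section SiteSeq.
Variables (M N : nat) (s : seq nat).
Hypothesis hs : site_seq M N s.

Lemma site_seq_sorted : sorted ltn s. Proof. by case/and3P: hs. Qed.
Lemma site_seq_size : size s = N. Proof. by case/and3P: hs => /eqP. Qed.
Lemma site_seq_uniq : uniq s. Proof. exact: sorted_uniq ltn_trans ltnn _ site_seq_sorted. Qed.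
Lemma site_seq_mem v : v \in s -> 0 < v <= M. Proof. by case/and3P: hs => _ _ /allP/(_ v). Qed.
Lemma site_seq_gt0 : all (fun v => 0 < v) s.
Proof. by apply/allP => v /site_seq_mem/andP[]. Qed.
Lemma site_seq_leM : all (fun v => v <= M) s.
Proof. by apply/allP => v /site_seq_mem/andP[]. Qed.

End SiteSeq.

Lemma interlace_nth y x i : interlace y x -> i < size x ->
  nth 0 y i <= nth 0 x i <= nth 0 y i.+1.
Proof. by case/andP=> _ /allP h hi; apply: h; rewrite mem_iota. Qed.

Lemma interlace_size y x : interlace y x -> size y = (size x).+1.
Proof. by case/andP=> /eqP. Qed.

Definition balanced (x y : seq nat) (i : nat) : bool :=
  cnt_le x i <= cnt_le y i <= (cnt_le x i).+1.

Section Interlace.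
Variables (x y : seq nat).
Hypotheses (sx : sorted ltn x) (sy : sorted ltn y) (hI : interlace y x).

Lemma pseq_filter : pseq y x = [seq v <- y | v \notin x].
Proof.
rewrite /pseq -[in RHS](mkseq_nth 0 y) /mkseq filter_map; congr map.
apply: eq_in_filter => i; rewrite mem_iota /=; move: i => /= i hi.
have sz := interlace_size hI.
rewrite -negb_or; congr negb; apply/idP/idP.
  by case/orP=> /andP[h1 /eqP ->]; apply: mem_nth => /=; lia.
case/(nthP 0)=> l /= hl hle.
case: (ltngtP l i) => hli; last by subst; rewrite hle eqxx hl.
  case: (ltnP l.+1 i) => hli2.
    have hi1 : i.-1 < size x by lia.
    have := interlace_nth hI hi1; rewrite prednK; last by lia.
    by have := ltn_sorted_nth sx (_ : l < i.-1) hi1; rewrite hle; lia.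
  have el : l = i.-1 by lia.
  by apply/orP; right; rewrite -hle el eqxx andbT; lia.
have hix : i < size x by lia.
exfalso; have := interlace_nth hI hix; have := ltn_sorted_nth sx hli hl.
by rewrite hle; lia.
Qed.

Lemma qseq_filter : qseq y x = [seq v <- x | v \notin y].
Proof.
rewrite /qseq -[in RHS](mkseq_nth 0 x) /mkseq filter_map; congr map.
apply: eq_in_filter => i; rewrite mem_iota /=; move: i => /= i hi.
have sz := interlace_size hI.
have hix := interlace_nth hI hi.
apply/idP/idP; last first.
  by move=> hn; apply/andP; split; apply/eqP => e; move: hn; rewrite e mem_nth //=; lia.
case/andP=> /eqP h1 /eqP h2; apply/negP; case/(nthP 0)=> l /= hl hle.
case: (ltngtP l i) => hli; first by have := ltn_sorted_nth sy hli (_ : i < size y); lia.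
  case: (ltngtP l i.+1) => hli2; first lia.
    by have := ltn_sorted_nth sy hli2 hl; lia.
  by subst; apply: h2; rewrite hle.
by subst; apply: h1; rewrite hle.
Qed.

Lemma interlace_balanced i : balanced x y i.
Proof.
rewrite /balanced.
have sz := interlace_size hI.
have := count_size (fun v => v <= i) x; have := count_size (fun v => v <= i) y.
rewrite -!/(cnt_le _ i) => hmy hm.
apply/andP; split.
  case e: (cnt_le x i) => [|n] //.
  have hn : n < size x by lia.
  have := cnt_le_nth i sx hn; have := cnt_le_nth i sy (_ : n < size y).
  by have := interlace_nth hI hn; rewrite e; lia.
case: (ltnP (cnt_le x i) (size x)) => hm'; last by lia.
have := cnt_le_nth i sx hm'; have := cnt_le_nth i sy (_ : (cnt_le x i).+1 < size y).
by have := interlace_nth hI hm'; lia.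
Qed.

End Interlace.

Definition admissible (x y : seq nat) (k : nat) : bool := all (balanced x y) (iota 0 k.+1).

Lemma interlace_admissible M N x y : site_seq M N x -> site_seq M N.+1 y ->
  interlace y x = admissible x y M.
Proof.
move=> hx hy; have sx := site_seq_sorted hx; have sy := site_seq_sorted hy.
apply/idP/allP => [hI i _ | adm]; first exact: interlace_balanced.
have bal i : i <= M -> balanced x y i by move=> hi; apply: adm; rewrite mem_iota; lia.
rewrite /interlace (site_seq_size hx) (site_seq_size hy) eqxx /=.
apply/allP => i; rewrite mem_iota add0n => /andP[_ hi].
have ix : i < size x by rewrite (site_seq_size hx).
have iy : i.+1 < size y by rewrite (site_seq_size hy).
have hxi : nth 0 x i <= M by apply: (allP (site_seq_leM hx)); exact: mem_nth.
have hyi : nth 0 y i.+1 <= M by apply: (allP (site_seq_leM hy)); exact: mem_nth.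
apply/andP; split; rewrite leqNgt; apply/negP => h.
- have c1 : i < cnt_le x (nth 0 x i) by rewrite -cnt_le_nth.
  have c2 : cnt_le y (nth 0 x i) <= i by rewrite leqNgt -cnt_le_nth ?(ltnW iy) // -ltnNge.
  by have := bal _ hxi; rewrite /balanced; lia.
- have c1 : i.+1 < cnt_le y (nth 0 y i.+1) by rewrite -cnt_le_nth.
  have c2 : cnt_le x (nth 0 y i.+1) <= i by rewrite leqNgt -cnt_le_nth // -ltnNge.
  by have := bal _ hyi; rewrite /balanced; lia.
Qed.

Definition excess (x y : seq nat) (i : nat) : bool := cnt_le x i < cnt_le y i.

Lemma balanced_step x y k (eo : bool) : uniq x -> uniq y -> balanced x y k ->
  excess x y k + (k.+1 \in y) = eo + (k.+1 \in x) ->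
  balanced x y k.+1 && (eo == excess x y k.+1).
Proof.
move=> ux uy; rewrite /balanced /excess !cnt_leS //.
by case: (k.+1 \in x); case: (k.+1 \in y); case: eo; case: ltnP => /=; lia.
Qed.

(* [w ep en bx by_] weighs a site [i] at which the auxiliary state goes from [ep]
   to [en], with [bx = (i \in x)] and [by_ = (i \in y)]. *)
Definition ice_rule (R : pzSemiRingType) (w : bool -> bool -> bool -> bool -> R) : Prop :=
  forall ep en bx by_ : bool, ep + by_ != en + bx -> w ep en bx by_ = 0%R.

Section Transfer.
Local Open Scope ring_scope.
Variables (R : comPzSemiRingType) (w : bool -> bool -> bool -> bool -> R).
Hypothesis hw : ice_rule w.

Fixpoint wmono (X Y : nat -> bool) (k : nat) (eo ei : bool) : R :=
  match k with
  | 0 => if eo == ei then 1 else 0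
  | k'.+1 => \sum_(s : bool) w s eo (X k'.+1) (Y k'.+1) * wmono X Y k' s ei
  end.

Definition site_weight (x y : seq nat) (i : nat) : R :=
  w (excess x y i.-1) (excess x y i) (i \in x) (i \in y).

Lemma wmono_path x y k eo : uniq x -> uniq y ->
  all (fun v => 0 < v)%N x -> all (fun v => 0 < v)%N y ->
  wmono (fun i => i \in x) (fun i => i \in y) k eo false =
  if admissible x y k && (eo == excess x y k) then \prod_(1 <= i < k.+1) site_weight x y i
  else 0.
Proof.
move=> ux uy px py; elim: k eo => [|k IH] eo.
  by rewrite /= /admissible /= /balanced /excess !cnt_le_eq0 //= big_geq.
have admS : admissible x y k.+1 = admissible x y k && balanced x y k.+1.
  by rewrite /admissible -addn1 iotaD all_cat /= andbT.
rewrite /= big_bool /= !IH admS (@big_nat_recr _ _ _ k.+1 1) //=.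
case adm: (admissible x y k) => /=; last by rewrite !mulr0 addr0.
have bal : balanced x y k.
  by move: adm; rewrite /admissible -addn1 iotaD all_cat /= andbT => /andP[].
case hk: (balanced x y k.+1 && (eo == excess x y k.+1)).
  move/andP: hk => [_ /eqP ->].
  by case e: (excess x y k) => /=; rewrite ?mulr0 ?addr0 ?add0r /site_weight /= e mulrC.
have w0 : w (excess x y k) eo (k.+1 \in x) (k.+1 \in y) = 0.
  by apply: hw; apply/negP => /eqP/(balanced_step ux uy bal); rewrite hk.
by case: (excess x y k) w0 => /= ->; rewrite ?mul0r ?mulr0 ?addr0 ?add0r.
Qed.

End Transfer.

Section Products.
Local Open Scope ring_scope.
Variable R : comPzSemiRingType.

Lemma prod_nat_cut (F : nat -> R) (f : nat -> nat) n :
  (forall m, (m <= n)%N -> (f m < f m.+1)%N) ->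
  \prod_((f 0%N).+1 <= i < f n.+1) F i =
  \prod_(0 <= m < n.+1) \prod_((f m).+1 <= i < f m.+1) F i * \prod_(1 <= m < n.+1) F (f m).
Proof.
elim: n => [|n IH] hf; first by rewrite big_nat1 [X in _ * X]big_geq // mulr1.
have lt0 m : (m <= n.+1)%N -> (f 0%N < f m.+1)%N.
  elim: m => [|m IHm] hm; first exact: hf.
  exact: ltn_trans (IHm (ltnW hm)) (hf _ hm).
have hn : (f n.+1 < f n.+2)%N by apply: hf.
rewrite (big_cat_nat (n := f n.+1)) ?lt0 ?(ltnW hn) // (big_ltn hn) IH; last first.
  by move=> m hm; apply: hf; rewrite ltnW.
by rewrite !(big_nat_recr n.+1) //=; ring.
Qed.

Lemma prod_seq_if (T : Type) (A B : R) (p : pred T) (s : seq T) :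
  \prod_(i <- s) (if p i then A else B) = A ^+ count p s * B ^+ count (predC p) s.
Proof.
elim: s => [|v s IH]; first by rewrite big_nil !expr0 mulr1.
by rewrite big_cons IH /=; case: (p v); rewrite /= ?add1n ?add0n exprS; ring.
Qed.

Lemma prod_mem_if (A B : R) (x : seq nat) a b : uniq x -> (a < b)%N ->
  \prod_(a.+1 <= i < b) (if i \in x then A else B) =
  A ^+ nx x a b * B ^+ (b - a - 1 - nx x a b).
Proof.
move=> ux ab; rewrite prod_seq_if.
have in_x : count (fun i => i \in x) (index_iota a.+1 b) = nx x a b.
  rewrite (@eq_count _ _ (fun v => predT v && (v \in x))) //.
  rewrite count_mem_sym ?iota_uniq //.
  by apply: eq_count => v /=; rewrite mem_iota; lia.
have := count_predC (fun i => i \in x) (index_iota a.+1 b).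
rewrite size_iota in_x => hc.
by congr (_ * _ ^+ _); apply/eqP; rewrite -(eqn_add2l (nx x a b)) hc; apply/eqP; lia.
Qed.

End Products.

Section Blocks.
Variables (M N : nat) (x y : seq nat).
Hypotheses (hx : site_seq M N x) (hy : site_seq M N.+1 y) (hI : interlace y x).

(* The p_j and the q_j of the statement, see [pseq_filter] and [qseq_filter]. *)
Let ydiff : seq nat := [seq v <- y | v \notin x].
Let xdiff : seq nat := [seq v <- x | v \notin y].
Let k := size xdiff.

Lemma sorted_ydiff : sorted ltn ydiff.
Proof. by rewrite /ydiff; apply: sorted_filter ltn_trans _ _ (site_seq_sorted hy). Qed.

Lemma sorted_xdiff : sorted ltn xdiff.
Proof. by rewrite /xdiff; apply: sorted_filter ltn_trans _ _ (site_seq_sorted hx). Qed.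

Lemma uniq_ydiff : uniq ydiff. Proof. exact: filter_uniq (site_seq_uniq hy). Qed.
Lemma uniq_xdiff : uniq xdiff. Proof. exact: filter_uniq (site_seq_uniq hx). Qed.

Lemma mem_ydiff v : (v \in ydiff) = (v \in y) && (v \notin x).
Proof. by rewrite mem_filter andbC. Qed.

Lemma mem_xdiff v : (v \in xdiff) = (v \in x) && (v \notin y).
Proof. by rewrite mem_filter andbC. Qed.

Lemma cnt_le_diff i : cnt_le y i + cnt_le xdiff i = cnt_le x i + cnt_le ydiff i.
Proof.
pose c s (p : pred nat) := count (fun v => (v <= i) && p v) s.
have cyd : cnt_le ydiff i = c y (fun v => v \notin x).
  by rewrite /cnt_le count_filter; apply: eq_count.
have cxd : cnt_le xdiff i = c x (fun v => v \notin y).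
  by rewrite /cnt_le count_filter; apply: eq_count.
have cy : cnt_le y i = c y (fun v => v \in x) + c y (fun v => v \notin x).
  exact: count_split.
have cx : cnt_le x i = c x (fun v => v \in y) + c x (fun v => v \notin y).
  exact: count_split.
have sym : c y (fun v => v \in x) = c x (fun v => v \in y).
  exact: count_mem_sym (site_seq_uniq hy) (site_seq_uniq hx).
lia.
Qed.

Lemma size_ydiff : size ydiff = k.+1.
Proof.
have leM s : all (fun v => v <= M) s -> forall a, all (fun v => v <= M) [seq v <- s | a v].
  by move=> h a; rewrite all_filter; apply: sub_all h => v /= ->; rewrite implybT.
have := cnt_le_diff M; rewrite !cnt_le_max ?leM ?(site_seq_leM hx) ?(site_seq_leM hy) //.
by rewrite (site_seq_size hx) (site_seq_size hy) -/k; lia.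
Qed.

Lemma cnt_le_xdiff_ydiff i : cnt_le xdiff i <= cnt_le ydiff i <= (cnt_le xdiff i).+1.
Proof.
have := interlace_balanced (site_seq_sorted hx) (site_seq_sorted hy) hI i.
by rewrite /balanced; have := cnt_le_diff i; lia.
Qed.

Lemma excess_diff i : excess x y i = (cnt_le xdiff i < cnt_le ydiff i).
Proof. by rewrite /excess; have := cnt_le_diff i; lia. Qed.

Lemma nth_ydiff_lt_xdiff j : j < k -> nth 0 ydiff j < nth 0 xdiff j.
Proof.
move=> jk; have jP : j < size ydiff by rewrite size_ydiff ltnW.
have ne : nth 0 ydiff j != nth 0 xdiff j.
  apply/eqP => e; have := mem_nth 0 jP; have := mem_nth 0 jk.
  by rewrite e mem_ydiff mem_xdiff => /andP[-> _] /andP[].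
rewrite ltn_neqAle ne leqNgt; apply/negP => lt_yx.
have c1 : j < cnt_le xdiff (nth 0 xdiff j) by rewrite -cnt_le_nth ?sorted_xdiff.
have c2 : cnt_le ydiff (nth 0 xdiff j) <= j.
  by rewrite leqNgt -cnt_le_nth ?sorted_ydiff // -ltnNge.
by have := cnt_le_xdiff_ydiff (nth 0 xdiff j); lia.
Qed.

Lemma nth_xdiff_lt_ydiff j : j < k -> nth 0 xdiff j < nth 0 ydiff j.+1.
Proof.
move=> jk; have jP : j.+1 < size ydiff by rewrite size_ydiff.
have ne : nth 0 ydiff j.+1 != nth 0 xdiff j.
  apply/eqP => e; have := mem_nth 0 jP; have := mem_nth 0 jk.
  by rewrite e mem_ydiff mem_xdiff => /andP[-> _] /andP[].
rewrite ltn_neqAle eq_sym ne leqNgt; apply/negP => lt_yx.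
have c1 : j.+1 < cnt_le ydiff (nth 0 ydiff j.+1) by rewrite -cnt_le_nth ?sorted_ydiff.
have c2 : cnt_le xdiff (nth 0 ydiff j.+1) <= j.
  by rewrite leqNgt -cnt_le_nth ?sorted_xdiff // -ltnNge.
by have := cnt_le_xdiff_ydiff (nth 0 ydiff j.+1); lia.
Qed.

Local Notation q := (qj M y x).

Lemma qseq_xdiff : qseq y x = xdiff.
Proof. exact: qseq_filter (site_seq_sorted hx) (site_seq_sorted hy) hI. Qed.

Lemma qj_nth j : 0 < j <= k -> q j = nth 0 xdiff j.-1.
Proof. by move=> hj; rewrite /qj qseq_xdiff !ifF //; apply/eqP; lia. Qed.

Lemma qj_last : q k.+1 = M.+1. Proof. by rewrite /qj qseq_xdiff eqxx. Qed.

Lemma qj_lt_nth_ydiff j : j <= k -> q j < nth 0 ydiff j.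
Proof.
case: j => [|j] hj; last by rewrite qj_nth //; apply: nth_xdiff_lt_ydiff.
have : nth 0 ydiff 0 \in ydiff by rewrite mem_nth // size_ydiff.
by rewrite mem_ydiff => /andP[/(site_seq_mem hy)/andP[]].
Qed.

Lemma nth_ydiff_lt_qj j : j <= k -> nth 0 ydiff j < q j.+1.
Proof.
rewrite leq_eqVlt => /orP[/eqP-> | jk]; last by rewrite qj_nth //; apply: nth_ydiff_lt_xdiff.
have : nth 0 ydiff k \in ydiff by rewrite mem_nth // size_ydiff.
by rewrite qj_last mem_ydiff => /andP[/(site_seq_mem hy)/andP[]].
Qed.

Lemma cnt_le_gap j i : j <= k -> q j <= i < nth 0 ydiff j ->
  cnt_le ydiff i = j /\ cnt_le xdiff i = j.
Proof.
move=> jk /andP[lo hi].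
split; [apply: (cnt_le_between sorted_ydiff) | apply: (cnt_le_between sorted_xdiff)];
  rewrite ?size_ydiff //; try lia.
- by move=> j0; have := @nth_ydiff_lt_qj j.-1; rewrite prednK //; lia.
- by move=> j0; have := @qj_nth j; lia.
- by move=> jk'; have := @nth_ydiff_lt_qj j; have := @qj_nth j.+1 => /=; lia.
Qed.

Lemma cnt_le_run j i : j <= k -> nth 0 ydiff j <= i < q j.+1 ->
  cnt_le ydiff i = j.+1 /\ cnt_le xdiff i = j.
Proof.
move=> jk /andP[lo hi].
split; [apply: (cnt_le_between sorted_ydiff) | apply: (cnt_le_between sorted_xdiff)];
  rewrite ?size_ydiff //; try lia.
- by move=> jk'; have := @qj_lt_nth_ydiff j.+1; lia.
- by move=> j0; have := @qj_lt_nth_ydiff j; have := @qj_nth j; lia.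
- by move=> jk'; have := @qj_nth j.+1 => /=; lia.
Qed.

Lemma mem_y_flat i : 0 < i ->
  cnt_le ydiff i.-1 = cnt_le ydiff i -> cnt_le xdiff i.-1 = cnt_le xdiff i ->
  (i \in y) = (i \in x).
Proof.
move=> i0 flat_y flat_x.
have ny : i \notin ydiff.
  apply/negP => iy; have := cnt_leS i.-1 uniq_ydiff.
  by rewrite prednK // iy flat_y /=; lia.
have nx : i \notin xdiff.
  apply/negP => ix; have := cnt_leS i.-1 uniq_xdiff.
  by rewrite prednK // ix flat_x /=; lia.
by move: ny nx; rewrite mem_ydiff mem_xdiff; case: (i \in x); case: (i \in y).
Qed.

Section Weights.
Local Open Scope ring_scope.
Variables (R : comPzSemiRingType) (w : bool -> bool -> bool -> bool -> R).
Local Notation sw := (site_weight w x y).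

Lemma site_weight_gap j i : (j <= k)%N -> (q j < i < nth 0%N ydiff j)%N ->
  sw i = w false false (i \in x) (i \in x).
Proof.
move=> jk /andP[lo hi].
have [cy1 cx1] : cnt_le ydiff i = j /\ cnt_le xdiff i = j by apply: cnt_le_gap => //; lia.
have [cy0 cx0] : cnt_le ydiff i.-1 = j /\ cnt_le xdiff i.-1 = j by apply: cnt_le_gap => //; lia.
rewrite /site_weight (@mem_y_flat i) ?cy0 ?cy1 ?cx0 ?cx1 //; last by lia.
by rewrite !excess_diff cy0 cy1 cx0 cx1 ltnn.
Qed.

Lemma site_weight_run j i : (j <= k)%N -> (nth 0%N ydiff j < i < q j.+1)%N ->
  sw i = w true true (i \in x) (i \in x).
Proof.
move=> jk /andP[lo hi].
have [cy1 cx1] : cnt_le ydiff i = j.+1 /\ cnt_le xdiff i = j by apply: cnt_le_run => //; lia.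
have [cy0 cx0] : cnt_le ydiff i.-1 = j.+1 /\ cnt_le xdiff i.-1 = j by apply: cnt_le_run => //; lia.
rewrite /site_weight (@mem_y_flat i) ?cy0 ?cy1 ?cx0 ?cx1 //; last by lia.
by rewrite !excess_diff cy0 cy1 cx0 cx1 ltnSn.
Qed.

Lemma site_weight_ydiff j : (j <= k)%N -> sw (nth 0%N ydiff j) = w false true false true.
Proof.
move=> jk; have lo := qj_lt_nth_ydiff jk; have hi := nth_ydiff_lt_qj jk.
have [cy1 cx1] : cnt_le ydiff (nth 0%N ydiff j) = j.+1 /\ cnt_le xdiff (nth 0%N ydiff j) = j.
  by apply: cnt_le_run => //; lia.
have [cy0 cx0] : cnt_le ydiff (nth 0%N ydiff j).-1 = j /\ cnt_le xdiff (nth 0%N ydiff j).-1 = j.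
  by apply: cnt_le_gap => //; lia.
have : nth 0%N ydiff j \in ydiff by rewrite mem_nth // size_ydiff.
rewrite mem_ydiff /site_weight !excess_diff cy0 cy1 cx0 cx1 ltnn ltnSn.
by case/andP=> -> /negbTE ->.
Qed.

Lemma site_weight_xdiff j : (j < k)%N -> sw (q j.+1) = w true false true false.
Proof.
move=> jk; have lo := nth_ydiff_lt_qj (ltnW jk); have hi := qj_lt_nth_ydiff jk.
have [cy1 cx1] : cnt_le ydiff (q j.+1) = j.+1 /\ cnt_le xdiff (q j.+1) = j.+1.
  by apply: cnt_le_gap => //; lia.
have [cy0 cx0] : cnt_le ydiff (q j.+1).-1 = j.+1 /\ cnt_le xdiff (q j.+1).-1 = j.
  by apply: cnt_le_run => //; lia.
have : q j.+1 \in xdiff by rewrite qj_nth ?mem_nth //=; lia.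
rewrite mem_xdiff /site_weight !excess_diff cy0 cy1 cx0 cx1 ltnn ltnSn.
by case/andP=> -> /negbTE ->.
Qed.

Lemma prod_block j : (j <= k)%N ->
  \prod_((q j).+1 <= i < q j.+1) sw i =
  w false true false true *
  (w true true true true ^+ nx x (nth 0%N ydiff j) (q j.+1) *
   w true true false false ^+ (q j.+1 - nth 0%N ydiff j - 1 - nx x (nth 0%N ydiff j) (q j.+1)) *
   w false false true true ^+ nx x (q j) (nth 0%N ydiff j) *
   w false false false false ^+ (nth 0%N ydiff j - q j - 1 - nx x (q j) (nth 0%N ydiff j))).
Proof.
move=> jk; have lo := qj_lt_nth_ydiff jk; have hi := nth_ydiff_lt_qj jk.
have ux := site_seq_uniq hx.
rewrite (big_cat_nat (n := nth 0%N ydiff j)) ?(ltnW hi) // (big_ltn hi) site_weight_ydiff //.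
have gap : \prod_((q j).+1 <= i < nth 0%N ydiff j) sw i =
    w false false true true ^+ nx x (q j) (nth 0%N ydiff j) *
    w false false false false ^+ (nth 0%N ydiff j - q j - 1 - nx x (q j) (nth 0%N ydiff j)).
  rewrite -prod_mem_if //; apply: eq_big_nat => i /(site_weight_gap jk) ->.
  by case: (i \in x).
have run : \prod_((nth 0%N ydiff j).+1 <= i < q j.+1) sw i =
    w true true true true ^+ nx x (nth 0%N ydiff j) (q j.+1) *
    w true true false false ^+ (q j.+1 - nth 0%N ydiff j - 1 - nx x (nth 0%N ydiff j) (q j.+1)).
  rewrite -prod_mem_if //; apply: eq_big_nat => i /(site_weight_run jk) ->.
  by case: (i \in x).
by rewrite gap run /=; ring.
Qed.

End Weights.

Local Open Scope ring_scope.

Lemma prod_site_weight (R : fieldType) (w : bool -> bool -> bool -> bool -> R) :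
  \prod_(1 <= i < M.+1) site_weight w x y i =
  w false true false true ^+ (size (qseq y x)).+1 * w true false true false ^+ size (qseq y x) *
  prodform M y x (w true true true true) (w true true false false)
                 (w false false true true) (w false false false false).
Proof.
have q_incr m : (m <= k)%N -> (q m < q m.+1)%N.
  by move=> mk; exact: ltn_trans (qj_lt_nth_ydiff mk) (nth_ydiff_lt_qj mk).
have := prod_nat_cut (site_weight w x y) q_incr; rewrite qj_last => ->.
have blocks : \prod_(0 <= m < k.+1) \prod_((q m).+1 <= i < q m.+1) site_weight w x y i =
    w false true false true ^+ k.+1 *
    prodform M y x (w true true true true) (w true true false false)
                   (w false false true true) (w false false false false).
  rewrite /prodform qseq_xdiff big_add1 /= -[in RHS](subn0 k.+1) -prodr_const_nat -big_split /=.
  apply: eq_big_nat => m /andP[_ mk]; rewrite prod_block //.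
  by rewrite /pj pseq_filter ?(site_seq_sorted hx) ?(site_seq_sorted hy).
have links : \prod_(1 <= m < k.+1) site_weight w x y (q m) = w true false true false ^+ k.
  transitivity (\prod_(1 <= m < k.+1) w true false true false); last first.
    by rewrite prodr_const_nat subn1.
  by apply: eq_big_nat => -[|m] // /andP[_ mk]; apply: site_weight_xdiff.
by rewrite blocks links qseq_xdiff; ring.
Qed.

End Blocks.

Local Open Scope ring_scope.

Theorem wmono_interlace (R : fieldType) (w : bool -> bool -> bool -> bool -> R) M N x y :
  ice_rule w -> site_seq M N x -> site_seq M N.+1 y ->
  wmono w (fun i => i \in x) (fun i => i \in y) M true false =
  if interlace y x then
    w false true false true ^+ (size (qseq y x)).+1 * w true false true false ^+ size (qseq y x) *
    prodform M y x (w true true true true) (w true true false false)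
                   (w false false true true) (w false false false false)
  else 0.
Proof.
move=> hw hx hy.
rewrite wmono_path ?(site_seq_uniq hx) ?(site_seq_uniq hy) ?(site_seq_gt0 hx) //;
  last exact: site_seq_gt0 hy.
have -> : excess x y M.
  rewrite /excess !cnt_le_max ?(site_seq_leM hx) ?(site_seq_leM hy) //.
  by rewrite (site_seq_size hx) (site_seq_size hy).
rewrite -(interlace_admissible hx hy) andbT.
by case hI: (interlace y x) => //; exact: (prod_site_weight hx hy hI w).
Qed.

Lemma mono_wmono (R : fieldType) (t a b c d e f u : R) (g : bool) (out inn X Y : nat -> bool)
    (w : bool -> bool -> bool -> bool -> R) :
  (forall i aout s,
     Lel t a b c d e f u aout (out i) s (inn i) = w (g (+) s) (g (+) aout) (X i) (Y i)) ->
  forall k aout ain,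
    mono t a b c d e f u k aout ain out inn = wmono w X Y k (g (+) aout) (g (+) ain).
Proof.
move=> hL; elim=> [|k IH] aout ain; first by case: (g) (aout) (ain) => -[] [].
by rewrite /= !big_bool !hL !IH; case: (g) => /=; rewrite ?negbK // addrC.
Qed.

Section LWeights.
Variables (R : fieldType) (t a b c d e f u : R).

(* The auxiliary space is relabelled for B, whose path starts in |1>, and the site
   spaces for hole configurations, so that the forced state is always [excess]. *)
Definition weight_B_particles ep en bx by_ := Lel t a b c d e f u (~~ en) by_ (~~ ep) bx.
Definition weight_B_holes ep en bx by_ := Lel t a b c d e f u (~~ en) (~~ bx) (~~ ep) (~~ by_).
Definition weight_C_particles ep en bx by_ := Lel t a b c d e f u en bx ep by_.
Definition weight_C_holes ep en bx by_ := Lel t a b c d e f u en (~~ by_) ep (~~ bx).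

Variables (M N : nat) (x y : seq nat).
Hypotheses (hx : site_seq M N x) (hy : site_seq M N.+1 y).

Lemma Bel_particles : Bel t a b c d e f u M (part_occ y) (part_occ x) = Gf t a b c d e f M y x u.
Proof.
rewrite /Bel (mono_wmono (g := true) (X := fun i => i \in x) (Y := fun i => i \in y)
  (w := weight_B_particles)); last first.
  by move=> i aout s; rewrite /weight_B_particles /= !negbK.
by rewrite /= (wmono_interlace _ hx hy) // => -[] [] [] [].
Qed.

Lemma Bel_holes : Bel t a b c d e f u M (hole_occ x) (hole_occ y) = Hf t a b c d e f M y x u.
Proof.
rewrite /Bel (mono_wmono (g := true) (X := fun i => i \in x) (Y := fun i => i \in y)
  (w := weight_B_holes)); last first.
  by move=> i aout s; rewrite /weight_B_holes /= !negbK.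
by rewrite /= (wmono_interlace _ hx hy) // => -[] [] [] [].
Qed.

Lemma Cel_particles : Cel t a b c d e f u M (part_occ x) (part_occ y) = Gbarf t a b c d e f M y x u.
Proof.
rewrite /Cel (mono_wmono (g := false) (X := fun i => i \in x) (Y := fun i => i \in y)
  (w := weight_C_particles)) //.
by rewrite /= (wmono_interlace _ hx hy) // => -[] [] [] [].
Qed.

Lemma Cel_holes : Cel t a b c d e f u M (hole_occ y) (hole_occ x) = Hbarf t a b c d e f M y x u.
Proof.
rewrite /Cel (mono_wmono (g := false) (X := fun i => i \in x) (Y := fun i => i \in y)
  (w := weight_C_holes)) //.
by rewrite /= (wmono_interlace _ hx hy) // => -[] [] [] [].
Qed.

End LWeights.

Theorem mainTheorem13 (R : fieldType) (t a b c d e f : R)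
  (ha : a != 0) (hb : b != 0) (hc : c != 0) (hd : d != 0) (he : e != 0) (hf : f != 0)
  (ht : t != 0) (ht1 : t != 1)
  (h1 : c * d + a * f = 0) (h2 : t * c * d + b * e = 0)
  (M N : nat) (hN : (N <= M - 1)%N) (hM : (1 <= M)%N)
  (x y xb yb : seq nat)
  (hx : site_seq M N x) (hy : site_seq M N.+1 y)
  (hxb : site_seq M N xb) (hyb : site_seq M N.+1 yb) (u : R) :
  [/\ Bel t a b c d e f u M (part_occ y) (part_occ x) = Gf t a b c d e f M y x u,
      Bel t a b c d e f u M (hole_occ xb) (hole_occ yb) = Hf t a b c d e f M yb xb u,
      Cel t a b c d e f u M (part_occ x) (part_occ y) = Gbarf t a b c d e f M y x u &
      Cel t a b c d e f u M (hole_occ yb) (hole_occ xb) = Hbarf t a b c d e f M yb xb u].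
Proof.
split; [exact: Bel_particles hx hy | exact: Bel_holes hxb hyb |
         exact: Cel_particles hx hy | exact: Cel_holes hxb hyb].
Qed.
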